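(* Let $L$ be a regular language over a finite alphabet $\Sigma$ and $\Delta$ a finite set of quantifier-free replacement queries (over string databases). Then $(q_L,\Delta)$ can be maintained in DynProp with suitable initialization.
   Context: Framework. A replacement rule for a relation symbol $R$ is $R := \mu_R(\bar p;\bar x)$, where $\mu_R$ is a first-order formula over the schema, $\bar x$ has the arity of $R$, and $\bar p$ is a tuple of parameter variables. A replacement query $\rho(\bar p)$ is a set of replacement rules for distinct relation symbols, all with the same parameter tuple $\bar p$; it is quantifier-free (resp. in $\mathrm{FO}[\exists^*]$) if all its formulas are quantifier-free (resp. existential). A change $\delta=\rho(\bar a)$ consists of $\rho$ and a tuple $\bar a$ of domain elements; $\delta(\mathcal D)$ replaces every relation $R$ having a rule in $\rho$ by $\{\bar b : \mathcal D\models \mu_R(\bar a;\bar b)\}$. A dynamic program operates on states consisting of an input database and an auxiliary database over a common fixed finite domain. For every allowed replacement query $\rho(\bar p)$ and every auxiliary symbol $T$ it has an update formula $\varphi_T(\bar p;\bar x)$ over input and auxiliary schema; on a change $\rho(\bar a)$ the input is replaced by its image and each $T$ becomes $\{\bar b: \text{old state}\models\varphi_T(\bar a,\bar b)\}$. A program maintains $(q,\Delta)$ if it has an auxiliary relation $Q$ that, after every nonempty sequence of changes from $\Delta$ applied to the initial input database, equals $q$ of the current input. DynFO / DynProp: update formulas first-order / quantifier-free. ''With suitable initialization'' means the initial auxiliary database need not be empty but may be a suitable auxiliary database depending on the initial input (polynomial-time computable in all cases of the paper). Strings: a word over $\Sigma$ is represented by a database with domain $\{1,\dots,n\}$, the natural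 linear order $<$, constants $\min=1$, $\max=n$, and one unary relation $R_\sigma$ per $\sigma\in\Sigma$, where each element is in at most one $R_\sigma$. Position $i$ carries $w_i=\sigma$ if $i\in R_\sigma$ and $w_i=\epsilon$ otherwise, and the database represents $w_1\cdots w_n$. Initially all $R_\sigma$ are empty. Changes never modify $<$, $\min$, $\max$, and only replacement queries are applied whose results again have each position in at most one $R_\sigma$. $q_L$ is the Boolean query that is true iff the represented word is in $L$. *)

From mathcomp Require Import all_boot.
Set Implicit Arguments. Unset Strict Implicit. Unset Printing Implicit Defensive.

Record dfa (S : finType) := DFA {
  dfa_state : finType;
  dfa_s0 : dfa_state;
  dfa_acc : pred dfa_state;
  dfa_trans : dfa_state -> S -> dfa_state }.

Definition dfa_accepts (S : finType) (M : dfa S) (w : seq S) : bool :=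
  @dfa_acc S M (foldl (@dfa_trans S M) (@dfa_s0 S M) w).

Definition regular (S : finType) (L : seq S -> Prop) : Prop :=
  exists M : dfa S, forall w, L w <-> dfa_accepts M w.

Inductive term (V : Type) : Type := TVar of V | TMin | TMax.

Inductive qf (S : Type) (A : Type) (ar : A -> nat) (V : Type) : Type :=
| QTrue
| QNot of qf S ar V
| QAnd of qf S ar V & qf S ar V
| QOr of qf S ar V & qf S ar V
| QEq of term V & term V
| QLt of term V & term V
| QLetter of S & term V
| QAux (T : A) of ('I_(ar T) -> term V).

(* Domain of a database of size n.+1 is 'I_n.+1 (positions 1..n.+1 shifted),
   with natural order, min = ord0, max = ord_max. *)
Definition inrel (S : Type) (n : nat) := S -> pred 'I_n.+1.
Definition auxrel (A : Type) (ar : A -> nat) (n : nat) :=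
  forall T : A, pred ((ar T).-tuple 'I_n.+1).

Definition eval_term (n : nat) (V : Type) (e : V -> 'I_n.+1) (t : term V) : 'I_n.+1 :=
  match t with TVar v => e v | TMin => ord0 | TMax => ord_max end.

Fixpoint eval (S : Type) (A : Type) (ar : A -> nat) (n : nat) (V : Type)
    (inp : inrel S n) (aux : auxrel ar n) (e : V -> 'I_n.+1) (phi : qf S ar V) : bool :=
  match phi with
  | QTrue => true
  | QNot p => ~~ eval inp aux e p
  | QAnd p q => eval inp aux e p && eval inp aux e q
  | QOr p q => eval inp aux e p || eval inp aux e q
  | QEq t u => eval_term e t == eval_term e u
  | QLt t u => (eval_term e t < eval_term e u)%N
  | QLetter s t => inp s (eval_term e t)
  | QAux T ts => aux T [tuple eval_term e (ts j) | j < ar T]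
  end.

Definition noar (v : Empty_set) : nat := match v with end.
Definition noaux (n : nat) : auxrel noar n := fun T => match T with end.

(* ---------- Quantifier-free replacement queries ----------
   rho(p_1..p_k) has at most one rule R_sigma := mu_sigma(p; x) per sigma
   (the rules never touch <, min, max).  Variables: inl i = p_i, inr _ = x. *)
Record rquery (S : finType) := RQuery {
  rq_k : nat;
  rq_rule : S -> option (@qf S Empty_set noar ('I_rq_k + 'I_1)%type) }.

Definition apply_rq (S : finType) (n : nat) (r : rquery S)
    (a : 'I_(rq_k r) -> 'I_n.+1) (inp : inrel S n) : inrel S n :=
  fun s => match rq_rule r s with
           | Some mu => fun b => eval inp (@noaux n)
                          (fun v => match v with inl i => a i | inr _ => b end) mu
           | None => inp s
           end.

(* ---------- DynProp programs ----------
   Auxiliary relational schema (dp_aux, dp_ar), designated query symbol dp_Q,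
   and a quantifier-free update formula phi_T(p; x) for every replacement query
   and every auxiliary symbol T (variables: inl i = p_i, inr j = x_j). *)
Record dynprog (S : finType) := DynProg {
  dp_aux : finType;
  dp_ar : dp_aux -> nat;
  dp_Q : dp_aux;
  dp_upd : forall (r : rquery S) (T : dp_aux),
             qf S dp_ar ('I_(rq_k r) + 'I_(dp_ar T))%type }.

Definition state (S : finType) (P : dynprog S) (n : nat) :=
  (inrel S n * auxrel (@dp_ar S P) n)%type.

Definition step (S : finType) (P : dynprog S) (n : nat) (r : rquery S)
    (a : 'I_(rq_k r) -> 'I_n.+1) (st : state P n) : state P n :=
  (apply_rq a st.1,
   fun (T : dp_aux P) (b : (@dp_ar S P T).-tuple 'I_n.+1) =>
     eval st.1 st.2 (fun v => match v with inl i => a i | inr j => tnth b j end)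
          (@dp_upd S P r T)).

Definition change (S : finType) (I : Type) (Delta : I -> rquery S) (n : nat) :=
  {i : I & 'I_(rq_k (Delta i)) -> 'I_n.+1}.

Fixpoint run (S : finType) (P : dynprog S) (n : nat) (I : Type)
    (Delta : I -> rquery S) (st : state P n) (cs : seq (change Delta n)) : state P n :=
  match cs with
  | [::] => st
  | c :: cs' => @run S P n I Delta (@step S P n (Delta (projT1 c)) (projT2 c) st) cs'
  end.

Definition valid_input (S : finType) (n : nat) (inp : inrel S n) : Prop :=
  forall (s t : S) (i : 'I_n.+1), inp s i -> inp t i -> s = t.

Fixpoint valid_seq (S : finType) (n : nat) (I : Type) (Delta : I -> rquery S)
    (inp : inrel S n) (cs : seq (change Delta n)) : Prop :=
  match cs with
  | [::] => True
  | c :: cs' => let inp' := @apply_rq S n (Delta (projT1 c)) (projT2 c) inp in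
                valid_input inp' /\ @valid_seq S n I Delta inp' cs'
  end.

Definition empty_input (S : finType) (n : nat) : inrel S n := fun _ _ => false.

(* letter at position i (epsilon = None) and represented word w_1 ... w_n *)
Definition letter (S : finType) (n : nat) (inp : inrel S n) (i : 'I_n.+1) : option S :=
  [pick s | inp s i].
Definition word_of (S : finType) (n : nat) (inp : inrel S n) : seq S :=
  pmap (letter inp) (enum 'I_n.+1).

Definition maintains (S : finType) (L : seq S -> Prop) (I : Type)
    (Delta : I -> rquery S) (P : dynprog S)
    (init : forall n, auxrel (@dp_ar S P) n) : Prop :=
  @dp_ar S P (dp_Q P) = 0 /\
  forall (n : nat) (cs : seq (change Delta n)),
    cs <> [::] -> @valid_seq S n I Delta (@empty_input S n) cs ->
    forall t : (@dp_ar S P (dp_Q P)).-tuple 'I_n.+1,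
      (@run S P n I Delta (@empty_input S n, init n) cs).2 (dp_Q P) t
      <-> L (word_of (@run S P n I Delta (@empty_input S n, init n) cs).1).

From mathcomp Require Import all_boot zify.
Set Implicit Arguments. Unset Strict Implicit. Unset Printing Implicit Defensive.

(** Fix a DFA for L. Besides the query bit, the program maintains for every map
    g on letters (epsilon included) and states p, q the binary relation
    R_{g,p,q}(u, w): the DFA goes from p to q on the word obtained by applying g
    to the letters strictly between u and w.  A change rho(a) cuts the string at
    the parameters a, min and max.  Inside a segment free of parameters, all
    atoms of a rule mu(a; x) other than R_s(x) have the same truth value at every
    position x, so the change acts there letterwise by a map h that only depends
    on the quantifier-free type of the segment's endpoints; the new R_{g,p,q} on
    the segment is the old R_{g o h,p,q}.  Hence the new relations are obtained
    by composing old relations on at most k+1 segments with single DFA steps at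
    the parameters: a boolean function of the truth values of finitely many
    atoms, which a quantifier-free formula in disjunctive normal form expresses. *)

Section QfDnf.
Variables (S A : Type) (ar : A -> nat) (V : Type).
Local Notation qf := (qf S ar V).

Definition qf_false : qf := QNot (QTrue S ar V).
Definition qf_all (fs : seq qf) : qf := foldr (@QAnd S A ar V) (QTrue S ar V) fs.
Definition qf_any (fs : seq qf) : qf := foldr (@QOr S A ar V) qf_false fs.

Variables (n : nat) (inp : inrel S n) (aux : auxrel ar n) (e : V -> 'I_n.+1).

Lemma eval_qf_all fs : eval inp aux e (qf_all fs) = all (eval inp aux e) fs.
Proof. by elim: fs => //= f fs ->. Qed.

Lemma eval_qf_any fs : eval inp aux e (qf_any fs) = has (eval inp aux e) fs.
Proof. by elim: fs => //= f fs ->. Qed.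

Variables (X : finType) (atom : X -> qf).
Local Notation type_of := [ffun x => eval inp aux e (atom x)].

Definition qf_type (v : {ffun X -> bool}) : qf :=
  qf_all [seq if v x then atom x else QNot (atom x) | x <- enum X].

Definition qf_dnf (F : pred {ffun X -> bool}) : qf :=
  qf_any [seq qf_type v | v <- enum {ffun X -> bool} & F v].

Lemma eval_qf_type v : eval inp aux e (qf_type v) = (v == type_of).
Proof.
rewrite eval_qf_all all_map; apply/allP/eqP => [Hv | ->].
  apply/ffunP => x; rewrite ffunE; have /= := Hv x (mem_enum _ x).
  by case: (v x) => /=; case: (eval inp aux e (atom x)).
move=> x _ /=; rewrite ffunE.
by case E: (eval inp aux e (atom x)) => /=; rewrite E.
Qed.

Lemma eval_qf_dnf F : eval inp aux e (qf_dnf F) = F type_of.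
Proof.
rewrite eval_qf_any has_map (eq_has (a2 := pred1 type_of)); last first.
  by move=> v /=; rewrite eval_qf_type.
by rewrite has_pred1 mem_filter mem_enum andbT.
Qed.

End QfDnf.

Section EvalAtoms.
Variables (S : finType) (W : Type).

Fixpoint eval_atoms (lt eq : term W -> term W -> bool) (has_letter : S -> term W -> bool)
    (mu : qf S noar W) : bool :=
  match mu with
  | QTrue => true
  | QNot p => ~~ eval_atoms lt eq has_letter p
  | QAnd p q => eval_atoms lt eq has_letter p && eval_atoms lt eq has_letter q
  | QOr p q => eval_atoms lt eq has_letter p || eval_atoms lt eq has_letter q
  | QEq t u => eq t u
  | QLt t u => lt t u
  | QLetter s t => has_letter s t
  | @QAux _ _ _ _ T _ => match T with end
  end.

Lemma eval_atomsE n (inp : inrel S n) (aux : auxrel noar n) (e : W -> 'I_n.+1) mu :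
  eval inp aux e mu =
  eval_atoms (fun t u => eval_term e t < eval_term e u)
             (fun t u => eval_term e t == eval_term e u)
             (fun s t => inp s (eval_term e t)) mu.
Proof. by elim: mu => //= [p -> | p -> q -> | p -> q -> | []]. Qed.

Lemma eq_eval_atoms lt1 eq1 l1 lt2 eq2 l2 mu :
  lt1 =2 lt2 -> eq1 =2 eq2 -> l1 =2 l2 ->
  eval_atoms lt1 eq1 l1 mu = eval_atoms lt2 eq2 l2 mu.
Proof. by move=> Hlt Heq Hl; elim: mu => //= [p -> | p -> q -> | p -> q ->]. Qed.

End EvalAtoms.

Section SegmentWord.
Variable S : finType.

Definition letter_map := {ffun option S -> option S}.

Definition segment_word n (lam : 'I_n.+1 -> option S) (g : letter_map) (u w : nat) : seq S :=
  pmap (fun j => g (lam (inord j))) (iota u.+1 (w - u.+1)).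

Lemma eq_segment_word n (lam lam' : 'I_n.+1 -> option S) (g h : letter_map) (u w : nat) :
  (forall j, u < j < w -> lam' (inord j) = h (lam (inord j))) ->
  segment_word lam' g u w = segment_word lam [ffun l => g (h l)] u w.
Proof.
move=> Hlam; apply: eq_in_pmap => j; rewrite mem_iota => /andP [uj jw].
by rewrite ffunE Hlam //; lia.
Qed.

Variable M : dfa S.
Local Notation delta := (@dfa_trans S M).

Definition step_letter (l : option S) (p : dfa_state M) : dfa_state M :=
  if l is Some s then delta p s else p.

Lemma foldl_segment_word_split n (lam : 'I_n.+1 -> option S) g (u c w : nat) p :
  u < c < w ->
  foldl delta p (segment_word lam g u w) =
  foldl delta (step_letter (g (lam (inord c))) (foldl delta p (segment_word lam g u c)))
        (segment_word lam g c w).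
Proof.
move=> /andP [uc cw]; rewrite /segment_word.
have -> : w - u.+1 = (c - u.+1) + (w - c.+1).+1 by lia.
rewrite iotaD pmap_cat foldl_cat.
have -> : u.+1 + (c - u.+1) = c by lia.
by rewrite /=; case: (g (lam (inord c))).
Qed.

Lemma foldl_pmap_enum_ord n (lam : 'I_n.+1 -> option S) :
  foldl delta (dfa_s0 M) (pmap lam (enum 'I_n.+1)) =
  if 0 < n then
    step_letter (lam ord_max)
      (foldl delta (step_letter (lam ord0) (dfa_s0 M)) (segment_word lam [ffun l => l] 0 n))
  else step_letter (lam ord0) (dfa_s0 M).
Proof.
have -> : enum 'I_n.+1 = map inord (iota 0 n.+1).
  rewrite -val_enum_ord -map_comp -[LHS]map_id; apply: eq_map => i /=.
  by rewrite inord_val.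
have -> : forall l, pmap lam (map inord l) = pmap (fun j => lam (inord j)) l.
  by elim=> //= j l ->.
have H0 : inord 0 = ord0 :> 'I_n.+1 by apply: val_inj; rewrite /= inordK.
case: n lam H0 => [|n] lam H0; first by rewrite /= H0; case: (lam ord0).
have Hmax : inord n.+1 = ord_max :> 'I_n.+2 by apply: val_inj; rewrite /= inordK.
have -> : iota 0 n.+2 = 0 :: (iota 1 n ++ [:: n.+1]) by rewrite -addn1 iotaD.
rewrite /= H0 pmap_cat /= Hmax /segment_word subn1.
rewrite (eq_pmap (f2 := fun j => [ffun l => l] (lam (inord j)))); last first.
  by move=> j; rewrite ffunE.
by case: (lam ord0) => [s|] /=; rewrite foldl_cat; case: (lam ord_max).
Qed.

End SegmentWord.

Section Program.
Variables (S : finType) (M : dfa S).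
Local Notation St := (dfa_state M).

Definition rel_sym := (letter_map S * St * St)%type.
Definition aux_sym := option rel_sym.
Definition aux_ar (T : aux_sym) : nat := if T is Some _ then 2 else 0.

Definition fterm (V : finType) := (V + bool)%type.

Definition fterm_term (V : finType) (c : fterm V) : term V :=
  match c with inl x => TVar x | inr false => TMin V | inr true => TMax V end.

Definition atom (V : finType) :=
  ((fterm V * fterm V) + (fterm V * fterm V) + (S * fterm V)
   + (rel_sym * fterm V * fterm V))%type.

Definition atom_qf (V : finType) (x : atom V) : qf S aux_ar V :=
  match x with
  | inl (inl (inl (c, d))) => QLt S aux_ar (fterm_term c) (fterm_term d)
  | inl (inl (inr (c, d))) => QEq S aux_ar (fterm_term c) (fterm_term d)
  | inl (inr (s, c)) => QLetter aux_ar s (fterm_term c)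
  | inr (y, c, d) => @QAux S aux_sym aux_ar V (Some y)
      (fun j => if val j == 0 then fterm_term c else fterm_term d)
  end.

Section Valuation.
Variables (V : finType) (v : {ffun atom V -> bool}).
Definition val_lt c d := v (inl (inl (inl (c, d)))).
Definition val_eq c d := v (inl (inl (inr (c, d)))).
Definition val_letter s c := v (inl (inr (s, c))).
Definition val_rel y c d := v (inr (y, c, d)).
End Valuation.

Section Update.
Variables (r : rquery S) (m : nat).
Local Notation k := (rq_k r).
Local Notation V := ('I_k + 'I_m)%type.
Local Notation rterm := (term ('I_k + 'I_1)).
Variable v : {ffun atom V -> bool}.

Definition param (i : 'I_k) : fterm V := inl (inl i).

Definition rule_fterm (t : rterm) : option (fterm V) :=
  match t with
  | TVar (inl i) => Some (param i)
  | TVar (inr _) => None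
  | TMin => Some (inr false)
  | TMax => Some (inr true)
  end.

Definition rule_fterm_at (c : fterm V) (t : rterm) : fterm V := odflt c (rule_fterm t).

Definition new_has_letter (c : fterm V) (s : S) : bool :=
  match rq_rule r s with
  | Some mu => eval_atoms (fun t t' => val_lt v (rule_fterm_at c t) (rule_fterm_at c t'))
                          (fun t t' => val_eq v (rule_fterm_at c t) (rule_fterm_at c t'))
                          (fun s' t => val_letter v s' (rule_fterm_at c t)) mu
  | None => val_letter v s c
  end.

Definition new_letter (c : fterm V) : option S := [pick s | new_has_letter c s].

Section Inner.
Variables (u w : fterm V).

(* [u] and [w] delimit a segment without parameters and the rule variable x
   stands for a position strictly inside it: so x < c iff w <= c. *)

Definition inner_lt (t t' : rterm) : bool :=
  match rule_fterm t, rule_fterm t' with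
  | None, None => false
  | None, Some c => val_lt v w c || val_eq v w c
  | Some c, None => val_lt v c u || val_eq v c u
  | Some c, Some d => val_lt v c d
  end.

Definition inner_eq (t t' : rterm) : bool :=
  match rule_fterm t, rule_fterm t' with
  | None, None => true
  | Some c, Some d => val_eq v c d
  | _, _ => false
  end.

Definition inner_has_letter (l : option S) (s : S) (t : rterm) : bool :=
  if rule_fterm t is Some c then val_letter v s c else l == Some s.

Definition inner_letter_map : letter_map S :=
  [ffun l => [pick s | if rq_rule r s is Some mu
                       then eval_atoms inner_lt inner_eq (inner_has_letter l) mu
                       else l == Some s]].

(* The default [p] is never used when the auxiliary relations are correct. *)
Definition old_segment_run (g : letter_map S) (p : St) : St :=
  odflt p [pick q | val_rel v ([ffun l => g (inner_letter_map l)], p, q) u w].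

End Inner.

(* Splitting at a parameter inside the segment leaves fewer parameters in both
   halves, so fuel [k.+1] suffices. *)
Fixpoint segment_run (g : letter_map S) (fuel : nat) (u w : fterm V) (p : St) : St :=
  if fuel is fuel'.+1 then
    if [pick i : 'I_k | val_lt v u (param i) && val_lt v (param i) w] is Some i then
      segment_run g fuel' (param i) w
        (step_letter (g (new_letter (param i))) (segment_run g fuel' u (param i) p))
    else old_segment_run u w g p
  else old_segment_run u w g p.

End Update.

Definition new_rel (r : rquery S) (y : rel_sym)
    (v : {ffun atom ('I_(rq_k r) + 'I_2)%type -> bool}) : bool :=
  let: (g, p, q) := y in
  segment_run v g (rq_k r).+1 (inl (inr ord0)) (inl (inr ord_max)) p == q.

Definition new_query (r : rquery S) (v : {ffun atom ('I_(rq_k r) + 'I_0)%type -> bool}) : bool :=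
  let mn := inr false in let mx := inr true in
  dfa_acc (if val_lt v mn mx then
             step_letter (new_letter v mx)
               (segment_run v [ffun l => l] (rq_k r).+1 mn mx
                  (step_letter (new_letter v mn) (dfa_s0 M)))
           else step_letter (new_letter v mn) (dfa_s0 M)).

Definition dfa_upd (r : rquery S) (T : aux_sym) : qf S aux_ar ('I_(rq_k r) + 'I_(aux_ar T))%type :=
  match T as T0 return qf S aux_ar ('I_(rq_k r) + 'I_(aux_ar T0))%type with
  | None => qf_dnf (@atom_qf _) (@new_query r)
  | Some y => qf_dnf (@atom_qf _) (@new_rel r y)
  end.

Definition dfa_prog : dynprog S := @DynProg S aux_sym aux_ar None dfa_upd.

Definition dfa_init (n : nat) : auxrel aux_ar n :=
  fun T => match T as T0 return pred ((aux_ar T0).-tuple 'I_n.+1) with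
  | None => fun _ => dfa_accepts M (word_of (@empty_input S n))
  | Some (g, p, q) => fun t =>
      foldl (@dfa_trans S M) p
        (segment_word (letter (@empty_input S n)) g (tnth t ord0) (tnth t ord_max)) == q
  end.

End Program.

Section Correctness.
Variables (S : finType) (M : dfa S).
Local Notation St := (dfa_state M).
Local Notation delta := (@dfa_trans S M).

Definition aux_correct n (inp : inrel S n) (aux : auxrel (@aux_ar S M) n) : Prop :=
  (forall t, aux None t = dfa_accepts M (word_of inp)) /\
  (forall (g : letter_map S) (p q : St) (t : 2.-tuple 'I_n.+1),
     aux (Some (g, p, q)) t =
     (foldl delta p (segment_word (letter inp) g (tnth t ord0) (tnth t ord_max)) == q)).

Lemma dfa_init_correct n : aux_correct (@empty_input S n) (@dfa_init S M n).
Proof. by []. Qed.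

Lemma valid_letterE n (inp : inrel S n) s x :
  valid_input inp -> inp s x = (letter inp x == Some s).
Proof.
move=> inp_valid; rewrite /letter; case: pickP => [t Ht | Hnone]; last by rewrite Hnone.
by apply/idP/eqP => [Hs | [<-] //]; rewrite (inp_valid _ _ _ Ht Hs).
Qed.

Section AtomValuation.
Variables (n : nat) (inp : inrel S n) (aux : auxrel (@aux_ar S M) n).
Variables (V : finType) (e : V -> 'I_n.+1).

Definition fterm_pos (c : fterm V) : 'I_n.+1 := eval_term e (fterm_term c).
Definition atom_val : {ffun atom M V -> bool} := [ffun x => eval inp aux e (atom_qf x)].

Lemma atom_val_lt c d : val_lt atom_val c d = (fterm_pos c < fterm_pos d).
Proof. by rewrite /val_lt ffunE. Qed.

Lemma atom_val_eq c d : val_eq atom_val c d = (fterm_pos c == fterm_pos d).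
Proof. by rewrite /val_eq ffunE. Qed.

Lemma atom_val_letter s c : val_letter atom_val s c = inp s (fterm_pos c).
Proof. by rewrite /val_letter ffunE. Qed.

Lemma atom_val_rel g p q c d : aux_correct inp aux ->
  val_rel atom_val (g, p, q) c d =
  (foldl delta p (segment_word (letter inp) g (fterm_pos c) (fterm_pos d)) == q).
Proof. by move=> [_ Hrel]; rewrite /val_rel ffunE /= Hrel !tnth_mktuple. Qed.

End AtomValuation.

Section ChangeLetters.
Variables (n : nat) (inp : inrel S n) (aux : auxrel (@aux_ar S M) n).
Variables (r : rquery S) (m : nat) (a : 'I_(rq_k r) -> 'I_n.+1).
Variable e : ('I_(rq_k r) + 'I_m)%type -> 'I_n.+1.
Hypothesis e_param : forall i, e (inl i) = a i.
Hypothesis inp_valid : valid_input inp.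
Local Notation v := (atom_val inp aux e).
Local Notation pos := (fterm_pos e).

Definition rule_env (x : 'I_n.+1) (z : ('I_(rq_k r) + 'I_1)%type) : 'I_n.+1 :=
  if z is inl i then a i else x.

Lemma fterm_pos_param i : pos (param m i) = a i.
Proof. by rewrite /fterm_pos /= e_param. Qed.

Lemma fterm_pos_rule c t : pos (rule_fterm_at c t) = eval_term (rule_env (pos c)) t.
Proof. by case: t => [[i|j]||] //=; rewrite /fterm_pos /= e_param. Qed.

Lemma letter_apply_rq_fterm c : letter (apply_rq a inp) (pos c) = new_letter v c.
Proof.
apply: eq_pick => s /=; rewrite /apply_rq /new_has_letter.
case: (rq_rule r s) => [mu|]; last by rewrite atom_val_letter.
rewrite eval_atomsE; apply: eq_eval_atoms => [t t'|t t'|s' t].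
- by rewrite atom_val_lt !fterm_pos_rule.
- by rewrite atom_val_eq !fterm_pos_rule.
- by rewrite atom_val_letter fterm_pos_rule.
Qed.

Section Inner.
Variables (u w : fterm ('I_(rq_k r) + 'I_m)%type) (x : 'I_n.+1).
Hypothesis u_lt_x : pos u < x.
Hypothesis x_lt_w : x < pos w.
Hypothesis no_param_inside : forall i, ~~ (pos u < a i < pos w).

Lemma rule_fterm_inner t :
  (rule_fterm m t = None /\ eval_term (rule_env x) t = x) \/
  (exists2 c, rule_fterm m t = Some c &
     eval_term (rule_env x) t = pos c /\ (pos c <= pos u \/ pos w <= pos c)).
Proof.
case: t => [[i|j]||] /=; [right | by left | right | right].
- exists (param m i) => //; rewrite fterm_pos_param; split=> //.
  by have := no_param_inside i; case/nandP; rewrite -leqNgt; [left | right].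
- by exists (inr false) => //; split=> //; left.
- exists (inr true) => //; split=> //; right.
  by rewrite /fterm_pos /= -ltnS ltn_ord.
Qed.

Lemma letter_apply_rq_inner :
  letter (apply_rq a inp) x = inner_letter_map v u w (letter inp x).
Proof.
rewrite ffunE; apply: eq_pick => s /=; rewrite /apply_rq.
case: (rq_rule r s) => [mu|]; last by rewrite (valid_letterE _ _ inp_valid).
(* Unfolding [reverse_coercion] unifies the finType instances hidden in the
   positions, which [lia] needs to identify them. *)
rewrite eval_atomsE; apply: eq_eval_atoms => [t t'|t t'|s' t].
- rewrite /inner_lt.
  case: (rule_fterm_inner t) => [[-> ->] | [c -> [-> Hc]]];
  case: (rule_fterm_inner t') => [[-> ->] | [d -> [-> Hd]]];
  rewrite ?atom_val_lt ?atom_val_eq -?(inj_eq (@ord_inj _)) /= /reverse_coercion; lia.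
- rewrite /inner_eq.
  case: (rule_fterm_inner t) => [[-> ->] | [c -> [-> Hc]]];
  case: (rule_fterm_inner t') => [[-> ->] | [d -> [-> Hd]]];
  rewrite ?atom_val_eq -?(inj_eq (@ord_inj _)) /= /reverse_coercion; lia.
- rewrite /inner_has_letter.
  case: (rule_fterm_inner t) => [[-> ->] | [c -> [-> _]]].
    exact: valid_letterE.
  by rewrite atom_val_letter.
Qed.

End Inner.

Hypothesis aux_ok : aux_correct inp aux.

Definition params_between (u w : fterm ('I_(rq_k r) + 'I_m)%type) : nat :=
  #|[pred i | pos u < a i < pos w]|.

Lemma params_between_lt u w i : pos u < a i < pos w ->
  params_between u (param m i) < params_between u w /\
  params_between (param m i) w < params_between u w.
Proof.
rewrite /params_between fterm_pos_param => /andP [ui iw].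
split; apply: proper_card; apply/properP; split.
- by apply/subsetP => j; rewrite !inE => /andP [uj ji]; rewrite uj /=; lia.
- by exists i; rewrite !inE ?ui ?iw ?ltnn ?andbF.
- by apply/subsetP => j; rewrite !inE => /andP [ij jw]; rewrite jw andbT; lia.
- by exists i; rewrite !inE ?ui ?iw ?ltnn ?andbF.
Qed.

Lemma old_segment_runE u w g p : (forall i, ~~ (pos u < a i < pos w)) ->
  old_segment_run v u w g p =
  foldl delta p (segment_word (letter (apply_rq a inp)) g (pos u) (pos w)).
Proof.
move=> no_param.
rewrite (@eq_segment_word _ _ (letter inp) _ g (inner_letter_map v u w)); last first.
  move=> j /andP [uj jw]; have jn : j < n.+1 by have := ltn_ord (pos w); lia.
  by apply: letter_apply_rq_inner => //; rewrite inordK.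
set q0 := foldl delta p _.
rewrite /old_segment_run; case: pickP => [q | /(_ q0)]; rewrite atom_val_rel // ?eqxx //.
by move/eqP.
Qed.

Lemma segment_run_fuelE g fuel u w p : params_between u w < fuel ->
  segment_run v g fuel u w p =
  foldl delta p (segment_word (letter (apply_rq a inp)) g (pos u) (pos w)).
Proof.
elim: fuel u w p => [//|fuel IH] u w p /= Hfuel.
case: pickP => [i /andP [ui iw] | Hnone]; last first.
  by apply: old_segment_runE => i; have := Hnone i; rewrite !atom_val_lt fterm_pos_param => ->.
rewrite !atom_val_lt fterm_pos_param in ui iw.
have [lt_left lt_right] := params_between_lt (introT andP (conj ui iw)).
rewrite !IH; try lia.
rewrite [RHS](foldl_segment_word_split _ _ _ (c := a i)) ?ui ?iw //.
by rewrite -(letter_apply_rq_fterm (param m i)) fterm_pos_param inord_val.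
Qed.

Lemma segment_runE g u w p :
  segment_run v g (rq_k r).+1 u w p =
  foldl delta p (segment_word (letter (apply_rq a inp)) g (pos u) (pos w)).
Proof. by apply: segment_run_fuelE; rewrite ltnS (leq_trans (max_card _)) ?card_ord. Qed.

End ChangeLetters.

Lemma step_aux_correct n (inp : inrel S n) (aux : auxrel (@aux_ar S M) n) (r : rquery S)
    (a : 'I_(rq_k r) -> 'I_n.+1) :
  aux_correct inp aux -> valid_input inp ->
  aux_correct (@step S (dfa_prog M) n r a (inp, aux)).1
              (@step S (dfa_prog M) n r a (inp, aux)).2.
Proof.
move=> aux_ok inp_valid; split=> [t | g p q t] /=; rewrite eval_qf_dnf.
  set e := fun z => match z with inl i => a i | inr j => tnth t j end.
  have e_param : forall i, e (inl i) = a i by [].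
  rewrite /new_query (segment_runE e_param inp_valid aux_ok) atom_val_lt.
  by rewrite -!(letter_apply_rq_fterm inp aux e_param) /dfa_accepts /word_of foldl_pmap_enum_ord.
set e := fun z => match z with inl i => a i | inr j => tnth t j end.
have e_param : forall i, e (inl i) = a i by [].
by rewrite /new_rel (segment_runE e_param inp_valid aux_ok).
Qed.

Lemma run_aux_correct (I : Type) (Delta : I -> rquery S) n (cs : seq (change Delta n))
    (inp : inrel S n) (aux : auxrel (@aux_ar S M) n) :
  aux_correct inp aux -> valid_input inp -> valid_seq inp cs ->
  aux_correct (@run S (dfa_prog M) n I Delta (inp, aux) cs).1
              (@run S (dfa_prog M) n I Delta (inp, aux) cs).2.
Proof.
elim: cs inp aux => [//|c cs IH] inp aux aux_ok inp_valid /= [inp'_valid cs_valid].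
exact: IH (step_aux_correct _ aux_ok inp_valid) inp'_valid cs_valid.
Qed.

End Correctness.

Theorem theorem6p1 (S : finType) (L : seq S -> Prop) (I : finType)
    (Delta : I -> rquery S) :
  regular L ->
  exists (P : dynprog S) (init : forall n : nat, auxrel (@dp_ar S P) n),
    @maintains S L I Delta P init.
Proof.
move=> [M HM]; exists (dfa_prog M), (@dfa_init S M); split=> // n cs _ cs_valid t.
have empty_valid : valid_input (@empty_input S n) by [].
have [query_ok _] := run_aux_correct (dfa_init_correct M n) empty_valid cs_valid.
by rewrite HM -(query_ok t).
Qed.
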